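(* Let $G(x)=\dfrac{1}{4\sqrt{2e^{-x}-1}}$ for real $x<\ln2$. Then: (1) $G$ is logarithmically absolutely monotonic on $(-\infty,\ln 2)$. (2) The sequences \[ (-1)^n\sum_{k=0}^{n}(-1)^kS(n,k)(2k-1)!!,\quad n\in\{0,1,2,\dots\}, \] and \[ (-1)^n\sum_{k=1}^{n}(-1)^kS(n,k)(2k-2)!!,\quad n\in\{1,2,\dots\}, \] are positive, increasing, and logarithmically convex.
   Context: A positive infinitely differentiable function $f$ on an interval $I$ is logarithmically absolutely monotonic if $[\ln f(x)]^{(n)}\ge0$ for all $n\in\mathbb{N}$ and $x\in I$. $S(n,k)$ are the Stirling numbers of the second kind, given by $\frac{(e^x-1)^k}{k!}=\sum_{n\ge k}S(n,k)\frac{x^n}{n!}$. Double factorials: $(2k-1)!!=1\cdot3\cdots(2k-1)$ for $k\ge1$, $(-1)!!=1$, and $(2j)!!=2^jj!$ with $0!!=1$. A sequence $(s_n)$ of positive numbers is logarithmically convex if $s_n^2\le s_{n-1}s_{n+1}$ for all $n$ at which both neighbours are defined. *)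

From Stdlib Require Import Reals Factorial.
From Coquelicot Require Import Coquelicot.
Open Scope R_scope.

(* Stirling numbers of the second kind, via the standard recurrence
   S(0,0)=1, S(0,k+1)=0, S(n+1,0)=0, S(n+1,k+1)=(k+1)S(n,k+1)+S(n,k);
   this is equivalent to the generating function (e^x-1)^k/k! = sum S(n,k) x^n/n!. *)
Fixpoint stirling2 (n k : nat) : nat :=
  match n, k with
  | O, O => 1%nat
  | O, S _ => 0%nat
  | S _, O => 0%nat
  | S n', S k' => (S k' * stirling2 n' (S k') + stirling2 n' k')%nat
  end.

(* (2k-1)!! = 1*3*...*(2k-1), with (-1)!! = 1 *)
Fixpoint odd_dfact (k : nat) : nat :=
  match k with
  | O => 1%nat
  | S k' => ((2 * k' + 1) * odd_dfact k')%nat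
  end.

(* (2j)!! = 2^j j!, with 0!! = 1 *)
Definition even_dfact (j : nat) : nat := (2 ^ j * fact j)%nat.

Definition log_abs_monotonic (f : R -> R) (I : R -> Prop) : Prop :=
  (forall x, I x -> 0 < f x) /\
  (forall (n : nat) x, I x -> ex_derive_n f n x) /\
  (forall (n : nat) x, I x -> (1 <= n)%nat ->
      0 <= Derive_n (fun y => ln (f y)) n x).

Definition G (x : R) : R := 1 / (4 * sqrt (2 * exp (- x) - 1)).

Definition seqA (n : nat) : R :=
  (-1) ^ n * sum_n_m (fun k => (-1) ^ k * INR (stirling2 n k) * INR (odd_dfact k)) 0 n.

Definition seqB (n : nat) : R :=
  (-1) ^ n * sum_n_m (fun k => (-1) ^ k * INR (stirling2 n k) * INR (even_dfact (k - 1))) 1 n.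

From Stdlib Require Import Reals Lra Lia List.
From Coquelicot Require Import Coquelicot.
Import ListNotations.
Open Scope R_scope.

(* (1) On x < ln 2 put u = 1/(2 - e^x).  Then (ln G)' = u and u' = e^x u^2, so every
   derivative of ln G is a combination of terms e^(a x) u^b with nonnegative
   coefficients and exponents; the same calculus with real exponents (G = e^(x/2) u^(1/2) / 4)
   shows that G is smooth.
   (2) Both sequences are moment sequences of negative binomial weights
   w_c(m) = (c)_m / (m! 2^m): a_n Z = sum_m w_(1/2)(m) (m + 1/2)^n and
   b_(n+1) Z' = sum_m w_1(m) m^n.  Indeed y^n = (-1)^n sum_k (-1)^k S(n,k) y^(k), with
   y^(k) the rising factorial, and summation by parts against the recurrence of w_c gives
   sum_m w_c(m) (m + c)^(k) = 2^k (c)_k Z, which is (2k-1)!! Z for c = 1/2 and (2k)!! Z for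
   c = 1.  Moments of a positive weight are positive and log-convex by Cauchy-Schwarz, and a
   positive log-convex sequence with s_0 <= s_1 (here s_0 = s_1 = 1) is nondecreasing. *)

(** * Logarithmic absolute monotonicity of G *)

Definition ln_recip_2_sub_exp (x : R) : R := - ln (2 - exp x).

(* [(c, a, b)] stands for c e^(a x) (2 - e^x)^(-b). *)
Definition expterm (t : R * R * R) (x : R) : R :=
  let '(c, a, b) := t in c * exp (a * x + b * ln_recip_2_sub_exp x).

Fixpoint expsum (l : list (R * R * R)) (x : R) : R :=
  match l with
  | [] => 0
  | t :: l => expterm t x + expsum l x
  end.

Definition expsum_deriv (l : list (R * R * R)) : list (R * R * R) :=
  flat_map (fun '(c, a, b) => [(c * a, a, b); (c * b, a + 1, b + 1)]) l.

Definition nonneg_expsum (l : list (R * R * R)) : Prop :=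
  List.Forall (fun '(c, a, b) => 0 <= c /\ 0 <= a /\ 0 <= b) l.

Lemma exp_lt_2 x : x < ln 2 -> exp x < 2.
Proof. intros Hx; rewrite <- (exp_ln 2) by lra; apply exp_increasing, Hx. Qed.

Lemma is_derive_expterm c a b x : x < ln 2 ->
  is_derive (expterm (c, a, b)) x (expsum [(c * a, a, b); (c * b, a + 1, b + 1)] x).
Proof.
  intros Hx; pose proof (exp_lt_2 x Hx); pose proof (exp_pos x).
  simpl expsum; unfold expterm, ln_recip_2_sub_exp, Rminus; auto_derive; [lra|].
  replace ((a + 1) * x + (b + 1) * - ln (2 + - exp x))
    with ((a * x + b * - ln (2 + - exp x)) + (x + - ln (2 + - exp x))) by ring.
  rewrite !exp_plus, exp_Ropp, exp_ln by lra; field; lra.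
Qed.

Lemma expsum_app l1 l2 x : expsum (l1 ++ l2) x = expsum l1 x + expsum l2 x.
Proof. induction l1 as [|t l1 IH]; simpl; [ring|]; rewrite IH; ring. Qed.

Lemma is_derive_expsum l x : x < ln 2 -> is_derive (expsum l) x (expsum (expsum_deriv l) x).
Proof.
  intros Hx; induction l as [|[[c a] b] l IH]; [apply (is_derive_const 0)|].
  change (expsum_deriv ((c, a, b) :: l))
    with ([(c * a, a, b); (c * b, a + 1, b + 1)] ++ expsum_deriv l).
  rewrite expsum_app.
  exact (is_derive_plus _ _ x _ _ (is_derive_expterm c a b x Hx) IH).
Qed.

Lemma nonneg_expsum_deriv l : nonneg_expsum l -> nonneg_expsum (expsum_deriv l).
Proof.
  induction 1 as [|[[c a] b] l [Hc [Ha Hb]] _ IH]; [constructor|].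
  simpl; constructor; [|constructor; [|exact IH]]; repeat split; nra.
Qed.

Lemma nonneg_expsum_iter n l : nonneg_expsum l -> nonneg_expsum (Nat.iter n expsum_deriv l).
Proof. intros Hl; induction n as [|n IH]; [exact Hl | apply nonneg_expsum_deriv, IH]. Qed.

Lemma expsum_nonneg l x : nonneg_expsum l -> 0 <= expsum l x.
Proof.
  induction 1 as [|[[c a] b] l [Hc _] _ IH]; simpl; [lra|].
  pose proof (exp_pos (a * x + b * ln_recip_2_sub_exp x)); nra.
Qed.

Lemma Derive_n_expsum (h : R -> R) l :
  (forall y, y < ln 2 -> h y = expsum l y) ->
  forall n x, x < ln 2 ->
  ex_derive_n h n x /\ Derive_n h n x = expsum (Nat.iter n expsum_deriv l) x.
Proof.
  intros Hh n; induction n as [|n IH]; intros x Hx; [split; [exact I | apply Hh, Hx]|].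
  assert (Hloc : locally x (fun y => expsum (Nat.iter n expsum_deriv l) y = Derive_n h n y)).
  { apply (filter_imp (fun y => y < ln 2)); [|apply open_lt, Hx].
    intros y Hy; symmetry; apply IH, Hy. }
  pose proof (is_derive_expsum (Nat.iter n expsum_deriv l) x Hx) as Hd.
  split.
  - apply (ex_derive_ext_loc _ _ x Hloc); eexists; exact Hd.
  - simpl Derive_n; rewrite <- (Derive_ext_loc _ _ x Hloc); apply is_derive_unique, Hd.
Qed.

Lemma G_expsum y : y < ln 2 -> G y = expsum [(/ 4, / 2, / 2)] y.
Proof.
  intros Hy; pose proof (exp_lt_2 y Hy); pose proof (exp_pos y).
  unfold G; simpl; unfold ln_recip_2_sub_exp.
  replace (2 * exp (- y) - 1) with ((2 - exp y) / exp y) by (rewrite exp_Ropp; field; lra).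
  rewrite <- Rpower_sqrt by (apply Rdiv_lt_0_compat; lra); unfold Rpower.
  rewrite ln_div, ln_exp by lra.
  replace (/ 2 * y + / 2 * - ln (2 - exp y)) with (- (/ 2 * (ln (2 - exp y) - y))) by ring.
  rewrite exp_Ropp; pose proof (exp_pos (/ 2 * (ln (2 - exp y) - y))); field; lra.
Qed.

Lemma Derive_ln_G y : y < ln 2 -> Derive (fun z => ln (G z)) y = expsum [(1, 0, 1)] y.
Proof.
  intros Hy.
  assert (Hloc : locally y (fun z => ln (/ 4) + (/ 2 * z + / 2 * ln_recip_2_sub_exp z) = ln (G z))).
  { apply (filter_imp (fun z => z < ln 2)); [|apply open_lt, Hy].
    intros z Hz; rewrite G_expsum by exact Hz; simpl.
    rewrite Rplus_0_r, ln_mult, ln_exp by (try apply exp_pos; lra); reflexivity. }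
  transitivity (Derive (fun z => ln (/ 4) + (/ 2 * z + / 2 * ln_recip_2_sub_exp z)) y);
    [symmetry; exact (Derive_ext_loc _ _ y Hloc)|apply is_derive_unique].
  pose proof (exp_lt_2 y Hy); pose proof (exp_pos y).
  simpl; unfold ln_recip_2_sub_exp; auto_derive; [lra|].
  replace (0 * y + 1 * - ln (2 - exp y)) with (- ln (2 - exp y)) by ring.
  rewrite exp_Ropp, exp_ln by lra; field; lra.
Qed.

Lemma log_abs_monotonic_G : log_abs_monotonic G (fun x => x < ln 2).
Proof.
  split; [|split].
  - intros x Hx; rewrite G_expsum by exact Hx; simpl.
    pose proof (exp_pos (/ 2 * x + / 2 * ln_recip_2_sub_exp x)); lra.
  - intros n x Hx; exact (proj1 (Derive_n_expsum G _ G_expsum n x Hx)).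
  - intros [|n] x Hx Hn; [lia|].
    replace (S n) with (n + 1)%nat by lia; rewrite <- Derive_n_comp.
    rewrite (proj2 (Derive_n_expsum (Derive_n (fun y => ln (G y)) 1) _ Derive_ln_G n x Hx)).
    apply expsum_nonneg, nonneg_expsum_iter; repeat constructor; simpl; lra.
Qed.

(** * Rising factorials and Stirling numbers *)

Fixpoint rising (x : R) (k : nat) : R :=
  match k with
  | O => 1
  | S k => rising x k * (x + INR k)
  end.

Lemma rising_pos x k : 0 < x -> 0 < rising x k.
Proof.
  intros Hx; induction k as [|k IH]; simpl; [lra|].
  pose proof (pos_INR k); apply Rmult_lt_0_compat; lra.
Qed.

Lemma rising_succ_shift x k : rising x (S k) = x * rising (x + 1) k.
Proof.
  induction k as [|k IH]; [simpl; ring|].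
  change (rising x (S (S k))) with (rising x (S k) * (x + INR (S k))).
  rewrite IH, S_INR; simpl; ring.
Qed.

Lemma rising_succ_sub x k :
  rising (x + 1) (S k) - rising x (S k) = INR (S k) * rising (x + 1) k.
Proof. rewrite (rising_succ_shift x k), S_INR; simpl; ring. Qed.

Lemma stirling2_gt n k : (n < k)%nat -> stirling2 n k = 0%nat.
Proof.
  revert k; induction n as [|n IH]; intros [|k] Hk; try lia; [reflexivity|].
  simpl; rewrite !IH by lia; lia.
Qed.

Definition stirling_transform (f : nat -> R) (n : nat) : R :=
  (-1) ^ n * sum_f_R0 (fun k => (-1) ^ k * INR (stirling2 n k) * f k) n.

Lemma stirling_transform_ext f g n :
  (forall k, f k = g k) -> stirling_transform f n = stirling_transform g n.
Proof.
  intros Hfg; unfold stirling_transform; f_equal.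
  apply sum_eq; intros k _; rewrite Hfg; reflexivity.
Qed.

Lemma stirling_transform_scal f c n :
  stirling_transform (fun k => f k * c) n = stirling_transform f n * c.
Proof.
  unfold stirling_transform; rewrite Rmult_assoc; f_equal.
  rewrite Rmult_comm, scal_sum; apply sum_eq; intros k _; ring.
Qed.

(* The recurrence of [stirling2], read as a summation by parts. *)
Lemma stirling_transform_succ f n :
  stirling_transform f (S n) = stirling_transform (fun k => f (S k) - INR k * f k) n.
Proof.
  set (p := fun k => (-1) ^ k * INR k * INR (stirling2 n k) * f k).
  assert (Hshift : sum_f_R0 (fun k => p (S k)) n = sum_f_R0 p n).
  { assert (Hp0 : p 0%nat = 0) by (unfold p; simpl; ring).
    assert (Hpn : p (S n) = 0) by (unfold p; rewrite stirling2_gt by lia; simpl; ring).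
    pose proof (decomp_sum p (S n) (Nat.lt_0_succ n)) as E; simpl pred in E.
    rewrite tech5, Hpn, Hp0 in E; lra. }
  unfold stirling_transform.
  transitivity ((-1) ^ S n *
    sum_f_R0 (fun k => p k - (-1) ^ k * INR (stirling2 n k) * f (S k)) n).
  - f_equal; rewrite decomp_sum by lia; simpl pred.
    change (stirling2 (S n) 0) with 0%nat; simpl INR.
    rewrite minus_sum, <- Hshift, <- minus_sum, Rmult_0_r, Rmult_0_l, Rplus_0_l.
    apply sum_eq; intros k _; unfold p.
    simpl stirling2; rewrite !plus_INR, mult_INR, S_INR; simpl pow; ring.
  - simpl pow; rewrite (Rmult_comm (-1)), Rmult_assoc; f_equal.
    rewrite scal_sum; apply sum_eq; intros k _; unfold p; ring.
Qed.

Lemma pow_stirling_transform y n : y ^ n = stirling_transform (rising y) n.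
Proof.
  induction n as [|n IH]; [unfold stirling_transform; simpl; ring|].
  rewrite stirling_transform_succ, (stirling_transform_ext _ (fun k => rising y k * y)).
  - rewrite stirling_transform_scal, <- IH; simpl; ring.
  - intros k; simpl; ring.
Qed.

(** * Moment sequences *)

(* [is_series_ext] states the pointwise equation in the carrier of an abstract
   normed module, where [ring] and [field] do not apply. *)
Lemma is_series_ext_R (a b : nat -> R) (l : R) :
  (forall n, a n = b n) -> is_series a l -> is_series b l.
Proof. apply is_series_ext. Qed.

Lemma is_series_sum_f_R0 (F : nat -> nat -> R) (L : nat -> R) N :
  (forall k, is_series (F k) (L k)) ->
  is_series (fun m => sum_f_R0 (fun k => F k m) N) (sum_f_R0 L N).
Proof.
  intros HF; induction N as [|N IH]; [apply HF|].
  exact (is_series_plus _ _ _ _ IH (HF (S N))).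
Qed.

Lemma is_series_stirling_transform (F : nat -> nat -> R) (L : nat -> R) n :
  (forall k, is_series (F k) (L k)) ->
  is_series (fun m => stirling_transform (fun k => F k m) n) (stirling_transform L n).
Proof.
  intros HF.
  exact (is_series_scal_l ((-1) ^ n) _ _ (is_series_sum_f_R0 _ _ n
    (fun k => is_series_scal_l ((-1) ^ k * INR (stirling2 n k)) _ _ (HF k)))).
Qed.

Lemma is_series_pow_of_rising (w y f : nat -> R) (Z : R) n :
  (forall k, is_series (fun m => w m * rising (y m) k) (f k * Z)) ->
  is_series (fun m => w m * y m ^ n) (stirling_transform f n * Z).
Proof.
  intros Hf; rewrite <- stirling_transform_scal.
  apply (is_series_ext_R (fun m => stirling_transform (fun k => rising (y m) k * w m) n)).
  - intros m; rewrite stirling_transform_scal, <- pow_stirling_transform; ring.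
  - apply (is_series_stirling_transform (fun k m => rising (y m) k * w m)); intros k.
    apply (is_series_ext_R _ _ _ (fun m => Rmult_comm (w m) _)), Hf.
Qed.

Lemma is_series_ge_term (a : nat -> R) l k :
  is_series a l -> (forall n, 0 <= a n) -> a k <= l.
Proof.
  intros Hl Ha.
  assert (Hpartial : forall n, a n <= sum_n a n /\ 0 <= sum_n a n).
  { induction n as [|n IH]; [rewrite sum_O; split; [lra|apply Ha]|].
    rewrite sum_Sn; specialize (Ha (S n)); simpl; unfold plus; simpl; lra. }
  apply Rle_trans with (1 := proj1 (Hpartial k)).
  apply (is_lim_seq_incr_compare (sum_n a) l Hl).
  intros n; rewrite sum_Sn; specialize (Ha (S n)); simpl; unfold plus; simpl; lra.
Qed.

Lemma is_series_nonneg (a : nat -> R) l : is_series a l -> (forall n, 0 <= a n) -> 0 <= l.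
Proof.
  intros Hl Ha; apply Rle_trans with (a 0%nat); [apply Ha | exact (is_series_ge_term a l 0 Hl Ha)].
Qed.

Lemma discriminant_nonpos a b c :
  0 <= a -> (forall t, 0 <= a * t ^ 2 - 2 * b * t + c) -> b ^ 2 <= a * c.
Proof.
  intros Ha Hq; pose proof (Hq 0) as Hc.
  destruct (Rle_lt_or_eq_dec 0 a Ha) as [Ha' | <-].
  - specialize (Hq (b / a)).
    replace (a * (b / a) ^ 2 - 2 * b * (b / a) + c) with ((a * c - b ^ 2) / a) in Hq
      by (field; lra).
    apply Rmult_le_compat_r with (r := a) in Hq; [|lra].
    unfold Rdiv in Hq; rewrite Rmult_assoc, Rinv_l, Rmult_1_r in Hq by lra; lra.
  - destruct (Req_dec b 0) as [-> | Hb]; [lra|].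
    specialize (Hq ((c + 1) / (2 * b))).
    replace (0 * ((c + 1) / (2 * b)) ^ 2 - 2 * b * ((c + 1) / (2 * b)) + c) with (-1) in Hq
      by (field; lra); lra.
Qed.

Lemma is_series_Cauchy_Schwarz (u t v : nat -> R) U T V :
  is_series u U -> is_series t T -> is_series v V ->
  (forall m, 0 <= u m) -> (forall m, 0 <= v m) -> (forall m, t m ^ 2 = u m * v m) ->
  T ^ 2 <= U * V.
Proof.
  intros HU HT HV Hu Hv Ht.
  apply discriminant_nonpos; [exact (is_series_nonneg u U HU Hu)|]; intros s.
  apply (is_series_nonneg (fun m => u m * s ^ 2 - 2 * t m * s + v m)).
  - exact (is_series_plus _ _ _ _ (is_series_minus _ _ _ _ (is_series_scal_r (s ^ 2) u U HU)
      (is_series_scal_r s _ _ (is_series_scal_l 2 t T HT))) HV).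
  - intros m; specialize (Ht m); specialize (Hu m); specialize (Hv m).
    assert (Hsq : u m * (u m * s ^ 2 - 2 * t m * s + v m)
                  = (u m * s - t m) ^ 2 + (u m * v m - t m ^ 2)) by ring.
    destruct (Rle_lt_or_eq_dec 0 (u m) Hu) as [Hu_pos | Hu0].
    + apply (Rmult_le_reg_l (u m) _ _ Hu_pos).
      rewrite Rmult_0_r, Hsq, Ht, Rminus_diag, Rplus_0_r; apply pow2_ge_0.
    + rewrite <- Hu0, Rmult_0_l in Ht |- *.
      assert (Ht0 : t m = 0) by nra; rewrite Ht0; lra.
Qed.

Section Moments.

Variables (w y s : nat -> R) (Z : R).
Hypothesis w_nonneg : forall m, 0 <= w m.
Hypothesis y_nonneg : forall m, 0 <= y m.
Hypothesis Z_pos : 0 < Z.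
Hypothesis is_series_moment : forall n, is_series (fun m => w m * y m ^ n) (s n * Z).

Lemma moment_pos k n : 0 < w k -> 0 < y k -> 0 < s n.
Proof.
  intros Hw Hy; apply (Rmult_lt_reg_r Z); [exact Z_pos|]; rewrite Rmult_0_l.
  apply Rlt_le_trans with (w k * y k ^ n).
  - apply Rmult_lt_0_compat; [exact Hw | apply pow_lt, Hy].
  - apply (is_series_ge_term _ _ k (is_series_moment n)); intros m.
    apply Rmult_le_pos; [apply w_nonneg | apply pow_le, y_nonneg].
Qed.

Lemma moment_log_convex n : s (S n) ^ 2 <= s n * s (S (S n)).
Proof.
  apply (Rmult_le_reg_r (Z ^ 2)); [apply pow_lt, Z_pos|].
  replace (s (S n) ^ 2 * Z ^ 2) with ((s (S n) * Z) ^ 2) by ring.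
  replace (s n * s (S (S n)) * Z ^ 2) with ((s n * Z) * (s (S (S n)) * Z)) by ring.
  apply (is_series_Cauchy_Schwarz _ _ _ _ _ _ (is_series_moment n)
    (is_series_moment (S n)) (is_series_moment (S (S n)))); intros m.
  1, 2: apply Rmult_le_pos; [apply w_nonneg | apply pow_le, y_nonneg].
  simpl; ring.
Qed.

End Moments.

Lemma log_convex_nondecreasing (s : nat -> R) :
  (forall n, 0 < s n) -> (forall n, s (S n) ^ 2 <= s n * s (S (S n))) ->
  s 0%nat <= s 1%nat -> forall n, s n <= s (S n).
Proof.
  intros Hpos Hlc H01 n; induction n as [|n IH]; [exact H01|].
  pose proof (Hpos n); pose proof (Hpos (S n)); pose proof (Hlc n).
  apply (Rmult_le_reg_l (s (S n))); [assumption|]; nra.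
Qed.

(** * Negative binomial weights *)

Lemma is_lim_seq_inv_succ : is_lim_seq (fun m => / INR (S m)) 0.
Proof.
  apply (is_lim_seq_inv (fun m => INR (S m)) p_infty); [|discriminate].
  exact (proj1 (is_lim_seq_incr_1 INR p_infty) is_lim_seq_INR).
Qed.

Section NegativeBinomial.

Variable c : R.
Hypothesis c_pos : 0 < c.

(* w_c(m) = (c)_m / (m! 2^m), the negative binomial law with parameters c and 1/2
   up to normalisation. *)
Fixpoint negbin_weight (m : nat) : R :=
  match m with
  | O => 1
  | S m => negbin_weight m * (INR m + c) / (2 * (INR m + 1))
  end.

Lemma negbin_weight_pos m : 0 < negbin_weight m.
Proof.
  induction m as [|m IH]; simpl; [lra|]; pose proof (pos_INR m).
  apply Rdiv_lt_0_compat; [apply Rmult_lt_0_compat|]; lra.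
Qed.

Lemma negbin_term_pos k m : 0 < negbin_weight m * rising (INR m + c) k.
Proof.
  pose proof (pos_INR m).
  apply Rmult_lt_0_compat; [apply negbin_weight_pos | apply rising_pos; lra].
Qed.

Lemma ex_series_negbin_rising k :
  ex_series (fun m => negbin_weight m * rising (INR m + c) k).
Proof.
  apply ex_series_Rabs, (ex_series_DAlembert _ (/ 2)); [lra| |].
  { intros m; apply Rgt_not_eq, negbin_term_pos. }
  apply (is_lim_seq_ext (fun m => / 2 * (1 + (c + INR k - 1) * / INR (S m)))).
  - intros m; pose proof (pos_INR m) as Hm.
    rewrite Rabs_pos_eq by (apply Rlt_le, Rdiv_lt_0_compat; apply negbin_term_pos).
    pose proof (negbin_weight_pos m) as Hw.
    simpl negbin_weight; rewrite S_INR.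
    replace (INR m + 1 + c) with (INR m + c + 1) by ring.
    set (x := INR m + c); assert (Hx : 0 < x) by (unfold x; lra).
    pose proof (rising_pos x k Hx) as Hr.
    assert (Hshift : rising (x + 1) k = rising x k * (x + INR k) / x).
    { apply (Rmult_eq_reg_l x); [|lra].
      rewrite <- rising_succ_shift; simpl; field; lra. }
    rewrite Hshift; unfold x in *.
    field; repeat split; lra.
  - pose proof (is_lim_seq_mult' _ _ _ _ (is_lim_seq_const (/ 2))
      (is_lim_seq_plus' _ _ _ _ (is_lim_seq_const 1)
        (is_lim_seq_mult' _ _ _ _ (is_lim_seq_const (c + INR k - 1)) is_lim_seq_inv_succ)))
      as Hlim.
    rewrite Rmult_0_r, Rplus_0_r, Rmult_1_r in Hlim; exact Hlim.
Qed.

Definition negbin_rising_moment (k : nat) : R :=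
  Series (fun m => negbin_weight m * rising (INR m + c) k).

Lemma is_series_negbin_rising_moment k :
  is_series (fun m => negbin_weight m * rising (INR m + c) k) (negbin_rising_moment k).
Proof. apply Series_correct, ex_series_negbin_rising. Qed.

Lemma negbin_rising_moment_pos k : 0 < negbin_rising_moment k.
Proof.
  apply Rlt_le_trans with (1 := negbin_term_pos k 0).
  apply (is_series_ge_term _ _ 0 (is_series_negbin_rising_moment k)).
  intros m; apply Rlt_le, negbin_term_pos.
Qed.

(* Summation by parts against the recurrence (m+1) w(m+1) = (m+c) w(m) / 2. *)
Lemma negbin_rising_moment_succ k :
  negbin_rising_moment (S k) = 2 * (c + INR k) * negbin_rising_moment k.
Proof.
  set (a := fun m => negbin_weight m * INR m * rising (INR m + c) k).
  set (l := negbin_rising_moment (S k) - (c + INR k) * negbin_rising_moment k).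
  assert (Ha : is_series a l).
  { apply (is_series_ext_R (fun m => negbin_weight m * rising (INR m + c) (S k)
                              - (c + INR k) * (negbin_weight m * rising (INR m + c) k))).
    - intros m; unfold a; simpl rising; ring.
    - exact (is_series_minus _ _ _ _ (is_series_negbin_rising_moment (S k))
        (is_series_scal_l (c + INR k) _ _ (is_series_negbin_rising_moment k))). }
  assert (Hshift : is_series (fun m => a (S m)) l).
  { assert (Ha0 : a 0%nat = 0) by (unfold a; simpl; ring).
    apply is_series_incr_1; change (is_series a (l + a 0%nat)).
    rewrite Ha0, Rplus_0_r; exact Ha. }
  assert (Hhalf : is_series (fun m => a (S m)) (/ 2 * negbin_rising_moment (S k))).
  { apply (is_series_ext_R (fun m => / 2 * (negbin_weight m * rising (INR m + c) (S k)))).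
    - intros m; unfold a; simpl negbin_weight; rewrite rising_succ_shift, S_INR.
      replace (INR m + 1 + c) with (INR m + c + 1) by ring.
      pose proof (pos_INR m); field; lra.
    - exact (is_series_scal_l (/ 2) _ _ (is_series_negbin_rising_moment (S k))). }
  pose proof (is_series_unique _ _ Hshift); pose proof (is_series_unique _ _ Hhalf).
  unfold l in *; lra.
Qed.

Lemma negbin_rising_moment_closed k :
  negbin_rising_moment k = 2 ^ k * rising c k * negbin_rising_moment 0.
Proof.
  induction k as [|k IH]; [simpl; ring|].
  rewrite negbin_rising_moment_succ, IH; simpl; ring.
Qed.

Lemma is_series_negbin_rising k :
  is_series (fun m => negbin_weight m * rising (INR m + c) k)
    (2 ^ k * rising c k * negbin_rising_moment 0).
Proof. rewrite <- negbin_rising_moment_closed; apply is_series_negbin_rising_moment. Qed.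

End NegativeBinomial.

(** * The sequences a_n and b_n *)

Lemma odd_dfact_rising k : INR (odd_dfact k) = 2 ^ k * rising (/ 2) k.
Proof.
  induction k as [|k IH]; [simpl; ring|].
  change (odd_dfact (S k)) with ((2 * k + 1) * odd_dfact k)%nat.
  rewrite mult_INR, IH, plus_INR, mult_INR; simpl; field.
Qed.

Lemma even_dfact_rising k : INR (even_dfact k) = 2 ^ k * rising 1 k.
Proof.
  unfold even_dfact; rewrite mult_INR, pow_INR; f_equal.
  induction k as [|k IH]; [simpl; ring|].
  rewrite fact_simpl, mult_INR, IH, S_INR; simpl; ring.
Qed.

Lemma seqA_stirling_transform n : seqA n = stirling_transform (fun k => INR (odd_dfact k)) n.
Proof.
  unfold seqA, stirling_transform; change (sum_n_m ?f 0 n) with (sum_n f n).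
  now rewrite sum_n_Reals.
Qed.

Lemma seqB_stirling_transform n :
  seqB (S n) =
  stirling_transform (fun k => INR (even_dfact k) - INR k * INR (even_dfact (k - 1))) n.
Proof.
  transitivity (stirling_transform (fun k => INR (even_dfact (k - 1))) (S n)).
  - unfold seqB, stirling_transform; f_equal.
    rewrite <- sum_n_Reals; unfold sum_n; rewrite (sum_Sn_m _ 0) by lia.
    change (stirling2 (S n) 0) with 0%nat; rewrite Rmult_0_r, Rmult_0_l.
    exact (eq_sym (Rplus_0_l _)).
  - rewrite stirling_transform_succ; apply stirling_transform_ext; intros k.
    simpl Nat.sub; rewrite Nat.sub_0_r; reflexivity.
Qed.

Lemma is_series_seqA n :
  is_series (fun m => negbin_weight (/ 2) m * (INR m + / 2) ^ n)
    (seqA n * negbin_rising_moment (/ 2) 0).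
Proof.
  rewrite seqA_stirling_transform; apply (is_series_pow_of_rising _ (fun m => INR m + / 2)).
  intros k; rewrite odd_dfact_rising; apply is_series_negbin_rising; lra.
Qed.

Lemma is_series_seqB n :
  is_series (fun m => negbin_weight 1 m * INR m ^ n) (seqB (S n) * negbin_rising_moment 1 0).
Proof.
  rewrite seqB_stirling_transform; apply (is_series_pow_of_rising _ INR).
  assert (HT : forall k, is_series (fun m => negbin_weight 1 m * rising (INR m + 1) k)
                           (INR (even_dfact k) * negbin_rising_moment 1 0)).
  { intros k; rewrite even_dfact_rising; apply is_series_negbin_rising; lra. }
  intros [|k].
  - rewrite Rmult_0_l, Rminus_0_r; exact (HT 0%nat).
  - simpl Nat.sub; rewrite Nat.sub_0_r.
    apply (is_series_ext_R (fun m => negbin_weight 1 m * rising (INR m + 1) (S k)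
             - INR (S k) * (negbin_weight 1 m * rising (INR m + 1) k))).
    + intros m; pose proof (rising_succ_sub (INR m) k).
      replace (rising (INR m) (S k))
        with (rising (INR m + 1) (S k) - INR (S k) * rising (INR m + 1) k) by lra; ring.
    + replace ((INR (even_dfact (S k)) - INR (S k) * INR (even_dfact k)) * negbin_rising_moment 1 0)
        with (INR (even_dfact (S k)) * negbin_rising_moment 1 0
              - INR (S k) * (INR (even_dfact k) * negbin_rising_moment 1 0)) by ring.
      exact (is_series_minus _ _ _ _ (HT (S k)) (is_series_scal_l (INR (S k)) _ _ (HT k))).
Qed.

Lemma seqA_pos n : 0 < seqA n.
Proof.
  apply (moment_pos (negbin_weight (/ 2)) (fun m => INR m + / 2) seqA
           (negbin_rising_moment (/ 2) 0)) with (k := 0%nat).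
  - intros m; apply Rlt_le, negbin_weight_pos; lra.
  - intros m; pose proof (pos_INR m); lra.
  - apply negbin_rising_moment_pos; lra.
  - exact is_series_seqA.
  - apply negbin_weight_pos; lra.
  - simpl; lra.
Qed.

Lemma seqA_log_convex n : seqA (S n) ^ 2 <= seqA n * seqA (S (S n)).
Proof.
  apply (moment_log_convex (negbin_weight (/ 2)) (fun m => INR m + / 2) seqA
           (negbin_rising_moment (/ 2) 0)).
  - intros m; apply Rlt_le, negbin_weight_pos; lra.
  - intros m; pose proof (pos_INR m); lra.
  - apply negbin_rising_moment_pos; lra.
  - exact is_series_seqA.
Qed.

Lemma seqA_nondecreasing n : seqA n <= seqA (S n).
Proof.
  apply (log_convex_nondecreasing seqA seqA_pos seqA_log_convex).
  rewrite !seqA_stirling_transform; unfold stirling_transform; simpl; lra.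
Qed.

Lemma seqB_pos n : 0 < seqB (S n).
Proof.
  apply (moment_pos (negbin_weight 1) INR (fun n => seqB (S n))
           (negbin_rising_moment 1 0)) with (k := 1%nat).
  - intros m; apply Rlt_le, negbin_weight_pos; lra.
  - intros m; apply pos_INR.
  - apply negbin_rising_moment_pos; lra.
  - exact is_series_seqB.
  - apply negbin_weight_pos; lra.
  - simpl; lra.
Qed.

Lemma seqB_log_convex n : seqB (S (S n)) ^ 2 <= seqB (S n) * seqB (S (S (S n))).
Proof.
  apply (moment_log_convex (negbin_weight 1) INR (fun n => seqB (S n))
           (negbin_rising_moment 1 0)).
  - intros m; apply Rlt_le, negbin_weight_pos; lra.
  - intros m; apply pos_INR.
  - apply negbin_rising_moment_pos; lra.
  - exact is_series_seqB.
Qed.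

Lemma seqB_nondecreasing n : seqB (S n) <= seqB (S (S n)).
Proof.
  apply (log_convex_nondecreasing (fun n => seqB (S n)) seqB_pos seqB_log_convex).
  rewrite !seqB_stirling_transform; unfold stirling_transform, even_dfact; simpl; lra.
Qed.

Theorem theorem6p2 :
  log_abs_monotonic G (fun x => x < ln 2) /\
  ((forall n : nat, 0 < seqA n) /\
   (forall n : nat, seqA n <= seqA (S n)) /\
   (forall n : nat, (1 <= n)%nat -> seqA n ^ 2 <= seqA (n - 1) * seqA (S n))) /\
  ((forall n : nat, (1 <= n)%nat -> 0 < seqB n) /\
   (forall n : nat, (1 <= n)%nat -> seqB n <= seqB (S n)) /\
   (forall n : nat, (2 <= n)%nat -> seqB n ^ 2 <= seqB (n - 1) * seqB (S n))).
Proof.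
  split; [exact log_abs_monotonic_G|]; split; repeat split.
  - exact seqA_pos.
  - exact seqA_nondecreasing.
  - intros [|n] Hn; [lia|]; rewrite Nat.sub_1_r; apply seqA_log_convex.
  - intros [|n] Hn; [lia|]; apply seqB_pos.
  - intros [|n] Hn; [lia|]; apply seqB_nondecreasing.
  - intros [|[|n]] Hn; [lia|lia|]; rewrite Nat.sub_1_r; apply seqB_log_convex.
Qed.
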